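(* Let $R$ be a ring and $\Psi:R\to R$ a ring endomorphism. Then $R$ is NJ-symmetric if and only if the skew formal power series ring $R[[x,\Psi]]$ is NJ-symmetric.
   Context: Rings are associative with identity. $R[[x,\Psi]]$ consists of formal power series $\sum_{i\ge 0} r_i x^i$ with $r_i\in R$, with multiplication determined by $xr=\Psi(r)x$ for $r\in R$. $N(S)$ is the set of nilpotent elements, $J(S)$ the Jacobson radical of a ring $S$. $S$ is NJ-symmetric if for all $a,b,c\in S$, $abc\in N(S)$ implies $bac\in J(S)$. *)

From HB Require Import structures.
From mathcomp Require Import all_boot all_order all_algebra.
Set Implicit Arguments. Unset Strict Implicit. Unset Printing Implicit Defensive.
Import GRing.Theory.
Local Open Scope ring_scope.

(* Ring-theoretic notions stated for an arbitrary carrier T equipped with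
   ring operations (0, 1, +, -, * ), so that they apply uniformly to R and to
   the skew power series ring R[[x,Psi]] built below. *)
Section RingNotions.
Variables (T : Type) (zero one : T) (add : T -> T -> T) (opp : T -> T)
          (mul : T -> T -> T).

Definition rpow (a : T) (n : nat) : T := iter n (mul a) one.

Definition is_nilpotent (a : T) : Prop := exists n : nat, rpow a n = zero.

Definition in_jacobson (a : T) : Prop :=
  forall r : T, exists u : T,
    mul u (add one (opp (mul r a))) = one /\ mul (add one (opp (mul r a))) u = one.

Definition NJ_symmetric_ops : Prop :=
  forall a b c : T, is_nilpotent (mul (mul a b) c) -> in_jacobson (mul (mul b a) c).
End RingNotions.

Definition NJ_symmetric (R : pzRingType) : Prop :=
  @NJ_symmetric_ops R 0 1 +%R (@GRing.opp R) *%R.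

(* Skew formal power series ring R[[x, Psi]]: a series sum_i r_i x^i is its
   coefficient sequence i |-> r_i; multiplication is determined by
   x r = Psi(r) x, i.e. (f g)_n = sum_{i+j=n} f_i Psi^i(g_j). *)
Section SkewPS.
Variables (R : pzRingType) (Psi : {rmorphism R -> R}).

Definition skewps := nat -> R.
Definition sps_zero : skewps := fun _ => 0.
Definition sps_one : skewps := fun n => if n == 0%N then 1 else 0.
Definition sps_add (f g : skewps) : skewps := fun n => f n + g n.
Definition sps_opp (f : skewps) : skewps := fun n => - f n.
Definition sps_mul (f g : skewps) : skewps :=
  fun n => \sum_(i < n.+1) f i * iter i Psi (g (n - i)%N).

Definition skewps_NJ_symmetric : Prop :=
  @NJ_symmetric_ops skewps sps_zero sps_one sps_add sps_opp sps_mul.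
End SkewPS.

From HB Require Import structures.
From mathcomp Require Import all_boot all_order all_algebra.
From Stdlib Require Import FunctionalExtensionality.
Set Implicit Arguments. Unset Strict Implicit. Unset Printing Implicit Defensive.
Import GRing.Theory.
Local Open Scope ring_scope.

(* Taking constant terms is a ring morphism R[[x,Psi]] -> R.  It reflects
   units, since a series whose constant term is invertible can be inverted
   coefficient by coefficient; hence nilpotency of abc and Jacobson membership
   of bac can be read off constant terms, and NJ-symmetry goes up from R to
   R[[x,Psi]].  Conversely, the constant series form a multiplicative section
   of this morphism, along which NJ-symmetry comes back down to R. *)

Record ringOps := RingOps {
  ops_sort :> Type;
  ops_zero : ops_sort;
  ops_one : ops_sort;
  ops_add : ops_sort -> ops_sort -> ops_sort;
  ops_opp : ops_sort -> ops_sort;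
  ops_mul : ops_sort -> ops_sort -> ops_sort
}.

Section OpsNotions.
Variable S : ringOps.

Definition ops_unit (x : S) : Prop :=
  exists u, ops_mul u x = ops_one S /\ ops_mul x u = ops_one S.
Definition ops_nilpotent : S -> Prop :=
  is_nilpotent (ops_zero S) (ops_one S) (@ops_mul S).
Definition ops_jacobson : S -> Prop :=
  in_jacobson (ops_one S) (@ops_add S) (@ops_opp S) (@ops_mul S).
Definition ops_NJ_symmetric : Prop :=
  NJ_symmetric_ops (ops_zero S) (ops_one S) (@ops_add S) (@ops_opp S) (@ops_mul S).

End OpsNotions.

Record ops_morphism (S T : ringOps) (f : S -> T) : Prop := OpsMorphism {
  morph0 : f (ops_zero S) = ops_zero T;
  morph1 : f (ops_one S) = ops_one T;
  morphD : {morph f : x y / ops_add x y};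
  morphN : {morph f : x / ops_opp x};
  morphM : {morph f : x y / ops_mul x y}
}.

Section OpsMorphismTheory.
Variables (S T : ringOps) (f : S -> T).
Hypothesis f_morph : ops_morphism f.

Lemma rpow_morph (a : S) n :
  f (rpow (ops_one S) (@ops_mul S) a n) = rpow (ops_one T) (@ops_mul T) (f a) n.
Proof. by elim: n => [|n IHn] /=; rewrite ?(morph1 f_morph) ?(morphM f_morph) ?IHn. Qed.

Lemma nilpotent_morph (a : S) : ops_nilpotent a -> ops_nilpotent (f a).
Proof. by case=> n an0; exists n; rewrite -rpow_morph an0 (morph0 f_morph). Qed.

Lemma unit_morph (x : S) : ops_unit x -> ops_unit (f x).
Proof.
by case=> u [ux1 xu1]; exists (f u); rewrite -!(morphM f_morph) ux1 xu1 (morph1 f_morph).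
Qed.

Lemma jacobson_morph (a : S) :
  (forall t, exists s, f s = t) -> ops_jacobson a -> ops_jacobson (f a).
Proof.
move=> f_surj Ja t; have [r <-] := f_surj t.
have := unit_morph (Ja r).
by rewrite (morphD f_morph) (morph1 f_morph) (morphN f_morph) (morphM f_morph).
Qed.

Lemma jacobson_reflect (a : S) :
  (forall x, ops_unit (f x) -> ops_unit x) -> ops_jacobson (f a) -> ops_jacobson a.
Proof.
move=> f_refl Jfa r; apply: f_refl.
by rewrite (morphD f_morph) (morph1 f_morph) (morphN f_morph) (morphM f_morph); apply: Jfa.
Qed.

End OpsMorphismTheory.

Lemma NJ_symmetric_reflect (S T : ringOps) (f : S -> T) :
  ops_morphism f -> (forall x, ops_unit (f x) -> ops_unit x) ->
  ops_NJ_symmetric T -> ops_NJ_symmetric S.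
Proof.
move=> f_morph f_refl NJT a b c /(nilpotent_morph f_morph).
rewrite !(morphM f_morph) => /NJT; rewrite -!(morphM f_morph).
exact: jacobson_reflect.
Qed.

Lemma NJ_symmetric_retract (S T : ringOps) (f : S -> T) (g : T -> S) :
  ops_morphism f -> ops_morphism g -> cancel g f ->
  ops_NJ_symmetric S -> ops_NJ_symmetric T.
Proof.
move=> f_morph g_morph gK NJS a b c /(nilpotent_morph g_morph).
rewrite !(morphM g_morph) => /NJS /(jacobson_morph f_morph).
by rewrite -!(morphM g_morph) gK; apply=> t; exists (g t).
Qed.

Section CourseOfValuesRecursion.
Variables (A : Type) (a0 : A) (step : nat -> (nat -> A) -> A).

Fixpoint cov_prefix n : seq A :=
  if n is m.+1 then rcons (cov_prefix m) (step m (nth a0 (cov_prefix m)))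
  else [::].

Definition cov_rec n : A := nth a0 (cov_prefix n.+1) n.

Lemma size_cov_prefix n : size (cov_prefix n) = n.
Proof. by elim: n => //= n IHn; rewrite size_rcons IHn. Qed.

Lemma nth_cov_prefix n m : (m < n)%N -> nth a0 (cov_prefix n) m = cov_rec m.
Proof.
elim: n => // n IHn; rewrite ltnS leq_eqVlt => /predU1P[-> // | lt_mn] /=.
by rewrite nth_rcons size_cov_prefix lt_mn IHn.
Qed.

Hypothesis step_ext :
  forall n u v, (forall m, (m < n)%N -> u m = v m) -> step n u = step n v.

Lemma cov_recE n : cov_rec n = step n cov_rec.
Proof.
rewrite /cov_rec /= nth_rcons size_cov_prefix ltnn eqxx.
by apply: step_ext => m; apply: nth_cov_prefix.
Qed.

End CourseOfValuesRecursion.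

Definition ring_ops (R : pzRingType) : ringOps := RingOps 0 1 +%R (@GRing.opp R) *%R.

Section SkewPowerSeries.
Variables (R : pzRingType) (Psi : {rmorphism R -> R}).
Local Notation smul := (sps_mul Psi).

Fact iter_rmorph_is_nmod_morphism i : nmod_morphism (iter i Psi).
Proof.
by elim: i => [|i [IH0 IHD]] //; split=> [|x y] /=; rewrite ?IH0 ?IHD (rmorph0, rmorphD).
Qed.

Fact iter_rmorph_is_monoid_morphism i : monoid_morphism (iter i Psi).
Proof.
by elim: i => [|i [IH1 IHM]] //; split=> [|x y] /=; rewrite ?IH1 ?IHM (rmorph1, rmorphM).
Qed.

HB.instance Definition _ i :=
  GRing.isNmodMorphism.Build R R (iter i Psi) (iter_rmorph_is_nmod_morphism i).
HB.instance Definition _ i :=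
  GRing.isMonoidMorphism.Build R R (iter i Psi) (iter_rmorph_is_monoid_morphism i).

Lemma sps_mul_rev (f g : skewps R) n :
  smul f g n = \sum_(k < n.+1) f (n - k)%N * iter (n - k) Psi (g k).
Proof.
rewrite /sps_mul (reindex_inj rev_ord_inj); apply: eq_bigr => k _ /=.
by rewrite subSS subKn // -ltnS.
Qed.

Lemma sps_mul_coef0 (f g : skewps R) : smul f g 0%N = f 0%N * g 0%N.
Proof. by rewrite /sps_mul big_ord1. Qed.

Lemma sps_mul1s (f : skewps R) : smul (sps_one R) f = f.
Proof.
apply: functional_extensionality => n; rewrite /sps_mul big_ord_recl mul1r subn0.
by rewrite big1 ?addr0 // => i _; rewrite mul0r.
Qed.

Lemma sps_muls1 (f : skewps R) : smul f (sps_one R) = f.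
Proof.
apply: functional_extensionality => n; rewrite sps_mul_rev big_ord_recl subn0.
by rewrite rmorph1 mulr1 big1 ?addr0 // => i _; rewrite rmorph0 mulr0.
Qed.

Lemma sps_mulA (f g h : skewps R) : smul (smul f g) h = smul f (smul g h).
Proof.
apply: functional_extensionality => n.
(* Both sides sum [F j l] over the pairs with [j + l <= n]. *)
pose F j l := f j * iter j Psi (g (n - j - l)%N) * iter (j + (n - j - l)) Psi (h l).
transitivity (\sum_(l < n.+1) \sum_(j < n.+1 | (j <= n - l)%N) F j l).
  rewrite sps_mul_rev; apply: eq_bigr => l _.
  rewrite /sps_mul big_distrl (big_ord_narrow_leq (leq_subr _ _)) /=.
  apply: eq_bigr => j _; have le_j : (j <= n - l)%N := ltn_ord j.
  by rewrite /F [in RHS]subnAC subnKC.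
rewrite (exchange_big_dep predT) //=; apply: eq_bigr => j _.
have le_jn : (j <= n)%N := ltn_ord j.
transitivity (\sum_(l < n.+1 | (l <= n - j)%N) F j l).
  apply: eq_bigl => l; have le_ln : (l <= n)%N := ltn_ord l.
  by rewrite !leq_subRL // addnC.
rewrite (big_ord_narrow_leq (leq_subr _ _)) sps_mul_rev rmorph_sum big_distrr /=.
by apply: eq_bigr => l _; rewrite rmorphM /= -iterD mulrA.
Qed.

Lemma sps_mul_rinv (g : skewps R) u0 :
  g 0%N * u0 = 1 -> exists r, smul g r = sps_one R /\ r 0%N = u0.
Proof.
move=> gu0.
(* Solve [(g r)_n = sps_one R n] for [r_n], using that [g_0 u0 = 1]. *)
pose step n (r : nat -> R) :=
  u0 * (sps_one R n - \sum_(i < n) g i.+1 * iter i.+1 Psi (r (n - i.+1)%N)).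
have step_ext n u v : (forall m, (m < n)%N -> u m = v m) -> step n u = step n v.
  move=> uv; congr (u0 * (_ - _)); apply: eq_bigr => i _; congr (_ * _).
  by rewrite uv // ltn_subrL (leq_ltn_trans (leq0n i) (ltn_ord i)).
pose r := cov_rec 0 step; have rE n : r n = step n r := cov_recE 0 step_ext n.
exists r; split; last by rewrite rE /step big_ord0 subr0 mulr1.
apply: functional_extensionality => n.
by rewrite /sps_mul big_ord_recl subn0 /= rE /step mulrA gu0 mul1r subrK.
Qed.

Definition skewps_ops : ringOps :=
  RingOps (sps_zero R) (sps_one R) (@sps_add R) (@sps_opp R) smul.

Lemma sps_unit_coef0 (f : skewps_ops) :
  ops_unit (f 0%N : ring_ops R) -> ops_unit f.
Proof.
case=> v [vf1 fv1]; have [r [fr1 r0]] := sps_mul_rinv fv1.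
(* [r] has a right inverse [s] too, and [s = (f r) s = f (r s) = f]. *)
have [s [rs1 _]] : exists s, smul r s = sps_one R /\ s 0%N = f 0%N.
  by apply: sps_mul_rinv; rewrite r0.
have sE : s = f by rewrite -[f]sps_muls1 -rs1 -sps_mulA fr1 sps_mul1s.
by exists r; rewrite /= -{1}sE rs1 fr1.
Qed.

Lemma sps_coef0_morphism : ops_morphism (fun f : skewps_ops => f 0%N : ring_ops R).
Proof. by split=> //= f g; rewrite sps_mul_coef0. Qed.

Definition sps_const (x : R) : skewps R := fun n => if n == 0%N then x else 0.

Lemma sps_const_coef0 : cancel sps_const (fun f => f 0%N).
Proof. by []. Qed.

Lemma sps_mul_const x y : smul (sps_const x) (sps_const y) = sps_const (x * y).
Proof.
apply: functional_extensionality => -[|n]; first by rewrite sps_mul_coef0.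
rewrite /sps_mul big_ord_recl /= mulr0 add0r.
by rewrite big1 // => i _; rewrite mul0r.
Qed.

Lemma sps_const_morphism : ops_morphism (sps_const : ring_ops R -> skewps_ops).
Proof.
split=> //= [|x y|x|x y]; last by rewrite sps_mul_const.
all: apply: functional_extensionality => -[|n] //=.
  by rewrite /sps_add /sps_const /= addr0.
by rewrite /sps_opp /sps_const /= oppr0.
Qed.

End SkewPowerSeries.

Theorem corollary2p27 (R : pzRingType) (Psi : {rmorphism R -> R}) :
  NJ_symmetric R <-> skewps_NJ_symmetric Psi.
Proof.
split.
- exact (NJ_symmetric_reflect (sps_coef0_morphism Psi) (@sps_unit_coef0 R Psi)).
- exact (NJ_symmetric_retract (sps_coef0_morphism Psi) (sps_const_morphism Psi)
                              (@sps_const_coef0 R)).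
Qed.
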